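(* Identify Kashiwara's crystal $B(\infty)$ with its polyhedral realization $\mathcal{B}(\infty)$ (equipped with the bicrystal structure described in the context), so that the Kashiwara–Park extended crystal $\widehat{B}(\infty)$ and the set $\widehat{\mathcal{B}}(\infty)$ are the same set. Then the maps $\widehat{\rm wt}$, $\widehat{\varepsilon}_{(i,k)}$, $\widetilde{E}_{(i,k)}$, $\widetilde{F}_{(i,k)}$ of the Kashiwara–Park extended crystal coincide, respectively, with the combinatorially defined maps $\widehat{\rm wt}$, $\widehat{\varepsilon}_{(i,k)}$, $\widetilde{E}_{(i,k)}$, $\widetilde{F}_{(i,k)}$ on $\widehat{\mathcal{B}}(\infty)$.
   Context: Let $\mathfrak{g}$ be a finite-dimensional simple Lie algebra of type $A_n$, $B_n$ or $D_n$ with index set $I=\{1,\dots,n\}$, and let $\iota_0=(\dots,n,\dots,1,n,\dots,1)$. The polyhedral realization $\mathcal{B}(\infty)\subset\mathbb{Z}_+^\infty$ is the image of $B(\infty)$ under the Kashiwara embedding for $\iota_0$; its points are written $b=(b_{s,t})$, where $b_{s,t}$ is the coordinate at the $s$-th occurrence of $t$ in $\iota_0$, $x_{s,t}$ are the coordinate functions, ${\bf e}_{s,t}$ the standard basis vectors (set to $0$ outside the relevant finite index set $\mathcal{I}_n^X$), and ${\bf v}(s,t)={\bf e}_{s,t}-{\bf e}_{s-1,t}$. Put $\beta_{s,t}=x_{s,t}+\sum_{k>t}\langle h_t,\alpha_k\rangle x_{s,k}+\sum_{k<t}\langle h_t,\alpha_k\rangle x_{s+1,k}+x_{s+1,t}$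 and $\beta^*_{s,t}=x_{s-1,t}+\sum_{k>t}\langle h_t,\alpha_k\rangle x_{s-1,k}+\sum_{k<t}\langle h_t,\alpha_k\rangle x_{s,k}+x_{s,t}$. For each $i$ there are tableaux $T_i$ (a single row with entries $T_i(1,t)=\beta_{t,i}$, of length $n+1-i$, $n$, $n-1$ in types $A_n,B_n,D_n$) and $T_i^*$ (a single row $T_i^*(1,t)=\beta^*_{t,i+1-t}$, $1\le t\le i$, for $i\le n$ in type $A$, $i\le n-1$ in type $B$, $i\le n-2$ in type $D$; for the remaining $i$ a staircase tableau: in type $B_n$, $T_n^*$ has shape $(n,n-1,\dots,1)$ with $T_n^*(s,t)=2\beta^*_{s+t-1,n-t}$ for $t\ge2$ and $T_n^*(s,1)=\beta^*_{s,n}$; in type $D_n$, $T_{n-1}^*$ has shape $(n-1,\dots,1)$ with $T_{n-1}^*(s,t)=\beta^*_{s+t-1,n-t}$ for $t\ge2$, $T_{n-1}^*(s,1)=\beta^*_{s,n-1}$ for $s$ odd and $\beta^*_{s,n}$ for $s$ even, and $T_n^*$ obtained by swapping $n-1$ and $n$ in the first column). For a cell $(s,t)$, $\mathcal{I}_T(s,t)$ denotes the index $(a,b)$ of the $\beta_{a,b}$ or $\beta^*_{a,b}$ in that cell. $\Pi_i$ is the set of nonempty partitions inside the shape of $T_i$, $\Pi_i^*$ the set of nonempty strict partitions inside the shape of $T_i^*$. For $\lambda=(l)\in\Pi_i$ let $\Gamma_\lambda=\sum_{s=l}^{|\eta|}\beta_{s,i}$ ($\eta$ the shape of $T_i$),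 and for $\mu\in\Pi_i^*$ let $\Gamma^*_\mu=\sum_{(s,t)\in\mu}T_i^*(s,t)$. The bicrystal structure on $\mathcal{B}(\infty)$ is: ${\rm wt}(b)=-\sum b_{s,t}\alpha_t$; $\varepsilon_i(b)=\max_{\lambda\in\Pi_i}\Gamma_\lambda(b)$, $\varepsilon_i^*(b)=\max_{\mu\in\Pi_i^*}\Gamma^*_\mu(b)$; with $m_i,M_i$ (resp. $m_i^*,M_i^*$) the minimal and maximal partitions attaining the maximum, $\widetilde{f}_i(b)=b+\sum_{(s,t)\in m_i}{\bf v}(\mathcal{I}_{T_i}(s,t))$, $\widetilde{e}_i(b)=b-\sum_{(s,t)\in M_i}{\bf v}(\mathcal{I}_{T_i}(s,t))$ (or ${\bf 0}$ if $\varepsilon_i(b)=0$), and similarly $\widetilde{f}_i^*,\widetilde{e}_i^*$ using $m_i^*,M_i^*,T_i^*$. (This bicrystal is shown in the paper to be isomorphic to Kashiwara's bicrystal $B(\infty)$ with its $*$-crystal structure.) Kashiwara–Park extended crystal: $\widehat{B}(\infty)$ is the set of ${\bf b}=(b^{(k)})_{k\in\mathbb{Z}}$ with $b^{(k)}\in B(\infty)$ and $b^{(k)}={\bf 1}$ for all but finitely many $k$, with $\widehat{\rm wt}({\bf b})=\sum_t(-1)^t{\rm wt}(b^{(t)})$, $\widehat{\varepsilon}_{(i,k)}({\bf b})=\varepsilon_i(b^{(k)})-\varepsilon_i^*(b^{(k+1)})$, $\widetilde{F}_{(i,k)}$ applying $\widetilde{f}_i$ to $b^{(k)}$ if $\widehat{\varepsilon}_{(i,k)}({\bf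 b})\ge0$ and $\widetilde{e}_i^*$ to $b^{(k+1)}$ otherwise, and $\widetilde{E}_{(i,k)}$ applying $\widetilde{e}_i$ to $b^{(k)}$ if $\widehat{\varepsilon}_{(i,k)}({\bf b})>0$ and $\widetilde{f}_i^*$ to $b^{(k+1)}$ otherwise. Combinatorial version: $\widehat{\mathcal{B}}(\infty)$ is the same kind of sequence set with entries in $\mathcal{B}(\infty)$. Let $\widehat{\Pi}_i=\Pi_i\cup\{\mu^*:\mu\in\Pi_i^*\}$ ordered by: $\lambda\le\mu^*$ always, $\lambda\le\lambda'$ iff $\lambda\subseteq\lambda'$, $\mu^*\le\nu^*$ iff $\mu\supseteq\nu$. Put $\widehat{\Gamma}^{(k)}_\lambda({\bf b})=\Gamma_\lambda(b^{(k)})$ and $\widehat{\Gamma}^{(k)}_{\mu^*}({\bf b})=\Gamma^*_\mu(b^{(k+1)})$; let $\widehat{m}_{(i,k)}({\bf b})$, $\widehat{M}_{(i,k)}({\bf b})$ be the minimal and maximal $\gamma\in\widehat{\Pi}_i$ attaining $\max_\gamma\widehat{\Gamma}^{(k)}_\gamma({\bf b})$. Define $\widehat{\rm wt}({\bf b})=\sum_t(-1)^t{\rm wt}(b^{(t)})$, $\widehat{\varepsilon}_{(i,k)}({\bf b})=\max_{\lambda\in\Pi_i}\widehat{\Gamma}^{(k)}_\lambda({\bf b})-\max_{\mu\in\Pi_i^*}\widehat{\Gamma}^{(k)}_{\mu^*}({\bf b})$, $\widetilde{E}_{(i,k)}({\bf b})={\bf b}-\sum_{(s,t)\in\lambda}{\bf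 v}(\mathcal{I}_{T_i}(s,t))^{(k)}$ if $\widehat{M}_{(i,k)}({\bf b})=\lambda$ is unstarred and ${\bf b}-\sum_{(s,t)\in\mu}{\bf v}(\mathcal{I}_{T_i^*}(s,t))^{(k+1)}$ if $\widehat{M}_{(i,k)}({\bf b})=\mu^*$, and $\widetilde{F}_{(i,k)}$ likewise with $+$ and $\widehat{m}_{(i,k)}$ (the superscript $(k)$ meaning the vector is placed in the $k$-th component). *)

From mathcomp Require Import all_boot all_order all_algebra.
Set Implicit Arguments. Unset Strict Implicit. Unset Printing Implicit Defensive.
Import Order.TTheory GRing.Theory Num.Theory.
Local Open Scope ring_scope.

Inductive ctype := TA | TB | TD.

Definition admissible (X : ctype) (n : nat) : bool :=
  match X with TA => (1 <= n)%N | TB => (2 <= n)%N | TD => (4 <= n)%N end.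

(* Cartan integers <h_t, alpha_k> (B_n: alpha_n short, <h_n,alpha_{n-1}> = -2;
   D_n: n-2 joined to n-1 and to n) *)
Definition cartan (X : ctype) (n t k : nat) : int :=
  if t == k then 2 else
  match X with
  | TA => if (t == k.+1) || (k == t.+1) then -1 else 0
  | TB => if (t == n) && (k == n.-1) then -2
          else if (t == k.+1) || (k == t.+1) then -1 else 0
  | TD => if ((t == n) && (k == (n - 2)%N)) || ((k == n) && (t == (n - 2)%N)) then -1
          else if [&& (t == k.+1) || (k == t.+1), (t < n)%N & (k < n)%N] then -1 else 0
  end.

(* number of occurrences of t in iota_0 : coordinates (s,t), 1 <= s <= len t *)
Definition len (X : ctype) (n t : nat) : nat :=
  match X with TA => (n.+1 - t)%N | TB => n | TD => n.-1 end.

Definition inI (X : ctype) (n s t : nat) : bool :=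
  (1 <= t <= n)%N && (1 <= s <= len X n t)%N.

(* points of Z^oo: b s t = b_{s,t} *)
Definition vec := nat -> nat -> int.
Definition vzero : vec := fun _ _ => 0.
Definition vadd (b c : vec) : vec := fun s t => b s t + c s t.
Definition vopp (b : vec) : vec := fun s t => - b s t.
Definition vsum (l : seq vec) : vec := fun s t => \sum_(x <- l) x s t.

Definition evec (X : ctype) (n s t : nat) : vec :=
  fun s' t' => if [&& s' == s, t' == t & inI X n s t] then 1 else 0.
Definition vv (X : ctype) (n : nat) (p : nat * nat) : vec :=
  fun s' t' => evec X n p.1 p.2 s' t' - evec X n p.1.-1 p.2 s' t'.

Definition beta (X : ctype) (n : nat) (b : vec) (s t : nat) : int :=
  b s t + \sum_(k <- iota t.+1 (n - t)) cartan X n t k * b s k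
        + \sum_(k <- iota 1 t.-1) cartan X n t k * b s.+1 k + b s.+1 t.

Definition betas (X : ctype) (n : nat) (b : vec) (s t : nat) : int :=
  b s.-1 t + \sum_(k <- iota t.+1 (n - t)) cartan X n t k * b s.-1 k
           + \sum_(k <- iota 1 t.-1) cartan X n t k * b s k + b s t.

Definition maxover {T : Type} (s : seq T) (f : T -> int) : int :=
  match s with
  | [::] => 0
  | x :: s' => foldr (fun y m => Num.max (f y) m) (f x) s'
  end.
Definition argmaxers {T : Type} (s : seq T) (f : T -> int) : seq T :=
  [seq x <- s | f x == maxover s f].
Definition least {T : Type} (d : T) (le : T -> T -> bool) (s : seq T) : T :=
  nth d s (find (fun x => all (le x) s) s).
Definition greatest {T : Type} (d : T) (le : T -> T -> bool) (s : seq T) : T :=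
  nth d s (find (fun x => all (fun y => le y x) s) s).

(* a partition is a seq of row lengths; its cells (row, column), 1-indexed *)
Definition cells (mu : seq nat) : seq (nat * nat) :=
  flatten [seq [seq (r.+1, c.+1) | c <- iota 0 (nth 0%N mu r)] | r <- iota 0 (size mu)].
Definition incl (mu nu : seq nat) : bool :=
  all (fun j => (nth 0%N mu j <= nth 0%N nu j)%N) (iota 0 (size mu)).

(* Pi_i : partitions (l) inside the single row T_i of length len X n i *)
Definition Pi (X : ctype) (n i : nat) : seq nat := iota 1 (len X n i).
Definition Gam (X : ctype) (n i : nat) (b : vec) (l : nat) : int :=
  \sum_(s <- iota l (len X n i - l).+1) beta X n b s i.
(* index of the beta in cell (1,t) of T_i *)
Definition Tidx (i : nat) (c : nat * nat) : nat * nat := (c.2, i).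

Definition eps (X : ctype) (n i : nat) (b : vec) : int := maxover (Pi X n i) (Gam X n i b).
Definition mi (X : ctype) (n i : nat) (b : vec) : nat :=
  least 0%N (fun x y => (x <= y)%N) (argmaxers (Pi X n i) (Gam X n i b)).
Definition Mi (X : ctype) (n i : nat) (b : vec) : nat :=
  greatest 0%N (fun x y => (x <= y)%N) (argmaxers (Pi X n i) (Gam X n i b)).
Definition ftil (X : ctype) (n i : nat) (b : vec) : vec :=
  vadd b (vsum [seq vv X n (Tidx i c) | c <- cells [:: mi X n i b]]).
(* None stands for the element 0 *)
Definition etil (X : ctype) (n i : nat) (b : vec) : option vec :=
  if eps X n i b == 0 then None
  else Some (vadd b (vopp (vsum [seq vv X n (Tidx i c) | c <- cells [:: Mi X n i b]]))).

Fixpoint subseqs (s : seq nat) : seq (seq nat) :=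
  match s with
  | [::] => [:: [::]]
  | x :: s' => [seq x :: u | u <- subseqs s'] ++ subseqs s'
  end.

Definition isStair (X : ctype) (n i : nat) : bool :=
  match X with TA => false | TB => i == n | TD => (i == n.-1) || (i == n) end.
Definition stsize (X : ctype) (n : nat) : nat :=
  match X with TB => n | _ => n.-1 end.

(* Pi_i^* : nonempty strict partitions inside the shape of T_i^* *)
Definition Pis (X : ctype) (n i : nat) : seq (seq nat) :=
  if isStair X n i then [seq mu <- subseqs (rev (iota 1 (stsize X n))) | mu != [::]]
  else [seq [:: l] | l <- iota 1 i].

(* index I_{T_i^*}(s,t) of the beta^* in cell (s,t) of T_i^* *)
Definition Tsidx (X : ctype) (n i : nat) (c : nat * nat) : nat * nat :=
  let s := c.1 in let t := c.2 in
  if ~~ isStair X n i then (t, (i.+1 - t)%N) else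
  match X with
  | TB => if t == 1%N then (s, n) else ((s + t).-1, (n.+1 - t)%N)
  | TD => if t == 1%N then (s, if odd s == (i == n.-1) then n.-1 else n)
          else ((s + t).-1, (n - t)%N)
  | TA => (t, (i.+1 - t)%N)
  end.
Definition Tscoef (X : ctype) (n i : nat) (c : nat * nat) : int :=
  match X with
  | TB => if isStair X n i && (1 < c.2)%N then 2 else 1
  | _ => 1
  end.

Definition Gams (X : ctype) (n i : nat) (b : vec) (mu : seq nat) : int :=
  \sum_(c <- cells mu) Tscoef X n i c * betas X n b (Tsidx X n i c).1 (Tsidx X n i c).2.

Definition epss (X : ctype) (n i : nat) (b : vec) : int := maxover (Pis X n i) (Gams X n i b).
Definition msi (X : ctype) (n i : nat) (b : vec) : seq nat :=
  least [::] incl (argmaxers (Pis X n i) (Gams X n i b)).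
Definition Msi (X : ctype) (n i : nat) (b : vec) : seq nat :=
  greatest [::] incl (argmaxers (Pis X n i) (Gams X n i b)).
Definition fstil (X : ctype) (n i : nat) (b : vec) : vec :=
  vadd b (vsum [seq vv X n (Tsidx X n i c) | c <- cells (msi X n i b)]).
Definition estil (X : ctype) (n i : nat) (b : vec) : option vec :=
  if epss X n i b == 0 then None
  else Some (vadd b (vopp (vsum [seq vv X n (Tsidx X n i c) | c <- cells (Msi X n i b)]))).

(* weight: wt(b) = - sum b_{s,t} alpha_t, as the coefficient function t |-> . *)
Definition wt (X : ctype) (n : nat) (b : vec) : nat -> int :=
  fun t => - \sum_(s <- iota 1 (len X n t)) b s t.

(* B(oo) (polyhedral realization) = the image of B(oo) under the Kashiwara
   embedding = the vectors obtained from 0 (= image of 1) by the f~_i *)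
Inductive Binf (X : ctype) (n : nat) : vec -> Prop :=
| Binf0 : Binf X n vzero
| BinfF (i : nat) (b : vec) : (1 <= i <= n)%N -> Binf X n b -> Binf X n (ftil X n i b).

(* an element of the extended crystal: (b^(k))_{k in Z} *)
Definition hvec := int -> vec.
Definition upd (bh : hvec) (k : int) (x : vec) : hvec :=
  fun k' => if k' == k then x else bh k'.

(* weight sums are over the window [-N, N] containing the support *)
Definition sign_int (k : int) : int := (-1) ^+ `|k|%N.
Definition window (N : nat) : seq int := [seq (j%:Z - N%:Z) | j <- iota 0 (N.*2.+1)].

Definition KP_wt (X : ctype) (n N : nat) (bh : hvec) : nat -> int :=
  fun t => \sum_(k <- window N) sign_int k * wt X n (bh k) t.
Definition KP_eps (X : ctype) (n i : nat) (k : int) (bh : hvec) : int :=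
  eps X n i (bh k) - epss X n i (bh (k + 1)).
Definition KP_F (X : ctype) (n i : nat) (k : int) (bh : hvec) : option hvec :=
  if 0 <= KP_eps X n i k bh then Some (upd bh k (ftil X n i (bh k)))
  else omap (upd bh (k + 1)) (estil X n i (bh (k + 1))).
Definition KP_E (X : ctype) (n i : nat) (k : int) (bh : hvec) : option hvec :=
  if 0 < KP_eps X n i k bh then omap (upd bh k) (etil X n i (bh k))
  else Some (upd bh (k + 1) (fstil X n i (bh (k + 1)))).

(* combinatorial extended crystal: widehat Pi_i = Pi_i (inl) + Pi_i^* (inr) *)
Definition Pihat (X : ctype) (n i : nat) : seq (nat + seq nat) :=
  [seq inl l | l <- Pi X n i] ++ [seq inr mu | mu <- Pis X n i].
Definition lehat (g h : nat + seq nat) : bool :=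
  match g, h with
  | inl l, inl l' => (l <= l')%N
  | inl _, inr _ => true
  | inr _, inl _ => false
  | inr mu, inr nu => incl nu mu
  end.
Definition Gamhat (X : ctype) (n i : nat) (k : int) (bh : hvec) (g : nat + seq nat) : int :=
  match g with
  | inl l => Gam X n i (bh k) l
  | inr mu => Gams X n i (bh (k + 1)) mu
  end.
Definition mhat (X : ctype) (n i : nat) (k : int) (bh : hvec) : nat + seq nat :=
  least (inr [::]) lehat (argmaxers (Pihat X n i) (Gamhat X n i k bh)).
Definition Mhat (X : ctype) (n i : nat) (k : int) (bh : hvec) : nat + seq nat :=
  greatest (inr [::]) lehat (argmaxers (Pihat X n i) (Gamhat X n i k bh)).

Definition comb_wt (X : ctype) (n N : nat) (bh : hvec) : nat -> int :=
  fun t => \sum_(k <- window N) sign_int k * wt X n (bh k) t.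
Definition comb_eps (X : ctype) (n i : nat) (k : int) (bh : hvec) : int :=
  maxover (Pi X n i) (fun l => Gamhat X n i k bh (inl l))
  - maxover (Pis X n i) (fun mu => Gamhat X n i k bh (inr mu)).
Definition comb_E (X : ctype) (n i : nat) (k : int) (bh : hvec) : hvec :=
  match Mhat X n i k bh with
  | inl l => upd bh k (vadd (bh k) (vopp (vsum [seq vv X n (Tidx i c) | c <- cells [:: l]])))
  | inr mu => upd bh (k + 1)
                (vadd (bh (k + 1)) (vsum [seq vv X n (Tsidx X n i c) | c <- cells mu]))
  end.
Definition comb_F (X : ctype) (n i : nat) (k : int) (bh : hvec) : hvec :=
  match mhat X n i k bh with
  | inl l => upd bh k (vadd (bh k) (vsum [seq vv X n (Tidx i c) | c <- cells [:: l]]))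
  | inr mu => upd bh (k + 1)
                (vadd (bh (k + 1)) (vopp (vsum [seq vv X n (Tsidx X n i c) | c <- cells mu])))
  end.

(* The weights and
   the functions eps_(i,k) agree on the nose.  The maximisers of Gamhat over
   Pihat_i are those of Gamma on Pi_i, or those of Gamma^* on Pi_i^*, according
   to the sign of eps_i(b^(k)) - eps_i^*(b^(k+1)); as unstarred partitions lie
   below starred ones and starred ones are ordered by reverse inclusion, the
   extreme maximiser is exactly the partition used by f_i, e_i, f_i^* or e_i^*.

   The only remaining point is that e_i is never applied to an element with
   eps_i = 0, nor e_i^* to one with eps_i^* = 0, i.e. that eps_i and eps_i^*
   are nonnegative on B(oo).  For eps_i we use Gamma_(len) = beta_(len,i), which is
   nonnegative on every vector satisfying a few linear inequalities
   (b_(s+1,t-1) <= b_(s,t), ...) that are preserved by every f_j.  For eps_i^*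
   we use a partition (a full row, or the whole staircase) whose Gamma^*
   telescopes to a single coordinate of b. *)

From mathcomp Require Import all_boot all_order all_algebra zify.
Import Order.TTheory GRing.Theory Num.Theory.
Local Open Scope ring_scope.
Set Implicit Arguments. Unset Strict Implicit.

(** * Maxima and extremal maximisers *)

Section MaxOver.
Variables (T : eqType) (f : T -> int).

Local Notation foldr_max a s := (foldr (fun y m => Num.max (f y) m) a s).

Lemma foldr_max_ub a s : a <= foldr_max a s /\ {in s, forall x, f x <= foldr_max a s}.
Proof.
elim: s => [|y s [IHa IHs]] /=; first by split.
split=> [|x]; first by rewrite le_max IHa orbT.
by rewrite inE le_max => /predU1P[->|/IHs->]; rewrite ?lexx ?orbT.
Qed.

Lemma foldr_max_attained a s :
  foldr_max a s = a \/ exists2 x, x \in s & f x = foldr_max a s.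
Proof.
elim: s => [|y s IH] /=; first by left.
rewrite /Num.max /Num.Def.maxr; case: ifP => _; last by right; exists y; rewrite ?mem_head.
case: IH => [->|[x xs fx]]; [by left | by right; exists x; rewrite // inE xs orbT].
Qed.

Lemma le_maxover s x : x \in s -> f x <= maxover s f.
Proof.
case: s => [//|y s]; have [ley les] := foldr_max_ub (f y) s.
by rewrite inE => /predU1P[->|/les].
Qed.

Lemma maxover_attained s : s != [::] -> exists2 x, x \in s & f x = maxover s f.
Proof.
case: s => [//|y s] _ /=; case: (foldr_max_attained (f y) s) => [->|[x xs fx]].
  by exists y; rewrite ?mem_head.
by exists x; rewrite // inE xs orbT.
Qed.

Lemma maxover_eq s m :
  {in s, forall x, f x <= m} -> (exists2 x, x \in s & f x = m) -> maxover s f = m.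
Proof.
move=> ub [x xs fx]; have [|y ys fy] := @maxover_attained s; first by case: (s) xs.
by apply/eqP; rewrite eq_le -fy ub //= -fx fy le_maxover.
Qed.

Lemma argmaxers_neq0 s : s != [::] -> argmaxers s f != [::].
Proof.
move=> /maxover_attained[x xs fx]; rewrite -size_eq0 size_filter -lt0n -has_count.
by apply/hasP; exists x; rewrite ?fx.
Qed.

End MaxOver.

Lemma has_minn (L : seq nat) : L != [::] -> has (fun x => all (leq x) L) L.
Proof.
case: L => [//|a L] _; have exL : exists k, k \in a :: L by exists a; rewrite mem_head.
by case: (ex_minnP exL) => m mL minm; apply/hasP; exists m => //; apply/allP.
Qed.

Lemma has_maxn (L : seq nat) : L != [::] -> has (fun x => all (fun y => y <= x)%N L) L.
Proof.
case: L => [//|a L] _; have exL : exists k, k \in a :: L by exists a; rewrite mem_head.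
have ubL k : k \in a :: L -> (k <= \max_(y <- a :: L) y)%N by move/leq_bigmax_seq; apply.
by case: (ex_maxnP exL ubL) => m mL maxm; apply/hasP; exists m => //; apply/allP.
Qed.

Lemma least_leq_mem_min (L : seq nat) : L != [::] ->
  least 0%N leq L \in L /\ {in L, forall y, (least 0%N leq L <= y)%N}.
Proof.
move=> L0; have minL := has_minn L0; split; first by rewrite /least (mem_nth 0%N) // -has_find.
by apply/allP; exact: (nth_find 0%N minL).
Qed.

Lemma nth_map_default (A B : Type) (f : A -> B) (x0 : A) s j :
  nth (f x0) (map f s) j = f (nth x0 s j).
Proof.
by case: (ltnP j (size s)) => ?; [rewrite (nth_map x0) | rewrite !nth_default ?size_map].
Qed.

Section ExtremaLehat.
Variables (L : seq nat) (R : seq (seq nat)).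

Lemma least_lehat_inl : L != [::] ->
  least (inr [::]) lehat (map inl L ++ map inr R) = inl (least 0%N leq L).
Proof.
move=> L0; rewrite /least find_cat.
have allE x : all (lehat (inl x)) (map inl L ++ map inr R) = all (leq x) L.
  by rewrite all_cat !all_map (@eq_all _ (preim inr (lehat (inl x))) predT) // all_predT andbT.
have hasL : has (fun x => all (lehat x) (map inl L ++ map inr R)) (map inl L).
  by rewrite has_map (eq_has allE) has_minn.
rewrite hasL nth_cat -has_find hasL find_map (eq_find allE) (nth_map 0%N) //.
by rewrite -has_find has_minn.
Qed.

Lemma greatest_lehat_inl : L != [::] ->
  greatest (inr [::]) lehat (map inl L ++ map inr [::]) = inl (greatest 0%N leq L).
Proof.
move=> L0; rewrite cats0 /greatest find_map.
rewrite (@eq_find _ _ (fun x => all (fun y => y <= x)%N L)); last by move=> x; rewrite /= all_map.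
by rewrite (nth_map 0%N) // -has_find has_maxn.
Qed.

Lemma greatest_lehat_inr : R != [::] ->
  greatest (inr [::]) lehat (map inl L ++ map inr R) = inr (least [::] incl R).
Proof.
move=> R0; rewrite /greatest /least find_cat.
have -> : has (fun x => all (lehat^~ x) (map inl L ++ map inr R)) (map inl L) = false.
  apply/negbTE/hasPn => _ /mapP[l _ ->]; rewrite all_cat !all_map.
  by case: R R0 => [//|r R'] _; rewrite /= andbF.
rewrite nth_cat size_map ltnNge leq_addr /= addKn find_map.
rewrite (@eq_find _ _ (fun mu => all (incl mu) R)) ?nth_map_default // => mu.
by rewrite /= all_cat !all_map (@eq_all _ (preim inl (lehat^~ (inr mu))) predT) // all_predT.
Qed.

Lemma least_lehat_inr :
  least (inr [::]) lehat (map inl [::] ++ map inr R) = inr (greatest [::] incl R).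
Proof.
rewrite /= /least /greatest find_map.
rewrite (@eq_find _ _ (fun mu => all (incl^~ mu) R)) ?nth_map_default // => mu.
by rewrite /= all_map.
Qed.

End ExtremaLehat.

Lemma filter_eq_gt_maxover (T : eqType) (s : seq T) (f : T -> int) m :
  maxover s f < m -> [seq x <- s | f x == m] = [::].
Proof.
move=> ltm; rewrite -(filter_pred0 s); apply: eq_in_filter => x xs /=.
by apply/negbTE; rewrite lt_eqF // (le_lt_trans (le_maxover f xs)).
Qed.

Lemma subseqs_self (s : seq nat) : s \in subseqs s.
Proof. by elim: s => [|x s IH] //=; rewrite mem_cat map_f. Qed.

Lemma Pi_neq0 X n i : admissible X n -> (1 <= i <= n)%N -> Pi X n i != [::].
Proof. by rewrite /Pi -size_eq0 size_iota; case: X => /=; lia. Qed.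

Lemma Pis_neq0 X n i : admissible X n -> (1 <= i <= n)%N -> Pis X n i != [::].
Proof.
move=> HX Hi; rewrite /Pis; case: ifP => stair; last by rewrite -size_eq0 size_map size_iota; lia.
rewrite -size_eq0 size_filter -lt0n -has_count; apply/hasP.
exists (rev (iota 1 (stsize X n))); first exact: subseqs_self.
by rewrite -size_eq0 size_rev size_iota; case: X HX stair => /=; lia.
Qed.

(** * The extended crystal maps *)

Section ExtendedArgmax.
Variables (X : ctype) (n i : nat) (k : int) (bh : hvec).
Hypotheses (Pi0 : Pi X n i != [::]) (Pis0 : Pis X n i != [::]).

Local Notation e := (eps X n i (bh k)).
Local Notation es := (epss X n i (bh (k + 1))).

Lemma maxover_Pihat : maxover (Pihat X n i) (Gamhat X n i k bh) = Num.max e es.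
Proof.
apply: maxover_eq.
  move=> g; rewrite mem_cat => /orP[] /mapP[x xs ->] /=; rewrite le_max.
    by rewrite le_maxover.
  by rewrite (le_maxover (Gams X n i (bh (k + 1))) xs) orbT.
have [le_e_es | lt_es_e] := lerP e es.
  have [mu mus Gmu] := maxover_attained (Gams X n i (bh (k + 1))) Pis0.
  by exists (inr mu); rewrite ?mem_cat ?map_f ?orbT //= Gmu.
have [l ls Gl] := maxover_attained (Gam X n i (bh k)) Pi0.
by exists (inl l); rewrite ?mem_cat ?map_f //= Gl.
Qed.

Lemma argmaxers_Pihat :
  argmaxers (Pihat X n i) (Gamhat X n i k bh) =
  map inl [seq l <- Pi X n i | Gam X n i (bh k) l == Num.max e es] ++
  map inr [seq mu <- Pis X n i | Gams X n i (bh (k + 1)) mu == Num.max e es].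
Proof. by rewrite /argmaxers maxover_Pihat filter_cat !filter_map. Qed.

Lemma KP_E_eq_comb_E : 0 <= es -> KP_E X n i k bh = Some (comb_E X n i k bh).
Proof.
move=> es_ge0; rewrite /KP_E /KP_eps /comb_E /Mhat argmaxers_Pihat subr_gt0.
have [lt_es_e | le_e_es] := ltrP es e.
  rewrite (@filter_eq_gt_maxover _ (Pis X n i)) // greatest_lehat_inl ?argmaxers_neq0 //.
  by rewrite /etil gt_eqF // (le_lt_trans es_ge0).
by rewrite greatest_lehat_inr ?argmaxers_neq0.
Qed.

Lemma KP_F_eq_comb_F : 0 <= e -> KP_F X n i k bh = Some (comb_F X n i k bh).
Proof.
move=> e_ge0; rewrite /KP_F /KP_eps /comb_F /mhat argmaxers_Pihat subr_ge0.
have [lt_e_es | le_es_e] := ltrP e es.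
  rewrite (@filter_eq_gt_maxover _ (Pi X n i)) // least_lehat_inr.
  by rewrite /estil gt_eqF // (le_lt_trans e_ge0).
by rewrite least_lehat_inl ?argmaxers_neq0.
Qed.

End ExtendedArgmax.

(** * Explicit form of beta and beta^* *)

Lemma sum_seq_single (r : seq nat) (F : nat -> int) j : j \in r -> uniq r ->
  {in r, forall k, k != j -> F k = 0} -> \sum_(k <- r) F k = F j.
Proof.
move=> jr ur F0; rewrite (bigD1_seq j) //= big1_seq ?addr0 // => k /andP[kj kr].
exact: F0.
Qed.

Lemma sum_iota_telescope (F f : nat -> int) a L :
  (forall c, (a <= c < a + L)%N -> F c = f c.+1 - f c) ->
  \sum_(c <- iota a L) F c = f (a + L)%N - f a.
Proof.
have -> : iota a L = index_iota a (a + L) by rewrite /index_iota addKn.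
exact/telescope_sumr_eq/leq_addr.
Qed.

Definition up_sum (X : ctype) (n t : nat) (g : nat -> int) : int :=
  match X with
  | TD => if (t.+3 <= n)%N then - g t.+1 else if t.+2 == n then - g t.+1 - g n else 0
  | _ => if (t < n)%N then - g t.+1 else 0
  end.

Definition low_sum (X : ctype) (n t : nat) (g : nat -> int) : int :=
  match X with
  | TA => if (2 <= t)%N then - g t.-1 else 0
  | TB => if (2 <= t)%N then (if t == n then -2 else -1) * g t.-1 else 0
  | TD => if t == n then - g n.-2 else if (2 <= t < n)%N then - g t.-1 else 0
  end.

Ltac cartan_cases :=
  rewrite /cartan; repeat (case: ifP => ?); rewrite ?mul0r ?mulN1r //; try lia.

Lemma sum_cartan_up X n t g : admissible X n -> (1 <= t <= n)%N ->
  \sum_(k <- iota t.+1 (n - t)) cartan X n t k * g k = up_sum X n t g.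
Proof.
move=> HX /andP[t1 tn].
have single_term : (t < n)%N ->
    (forall k, (t.+1 < k <= n)%N -> cartan X n t k * g k = 0) ->
    \sum_(k <- iota t.+1 (n - t)) cartan X n t k * g k = cartan X n t t.+1 * g t.+1.
  move=> ltn F0; apply: sum_seq_single; rewrite ?iota_uniq ?mem_iota //; first lia.
  by move=> k; rewrite mem_iota => kr kt; apply: F0; lia.
have [ltn|len] := ltnP t n; last first.
  have -> : (n - t = 0)%N by lia.
  by rewrite big_nil; case: X {HX single_term} => /=; repeat (case: ifP => ?); lia.
case: X HX single_term => /= HX single_term.
- by rewrite ltn single_term // => [|k hk]; cartan_cases.
- by rewrite ltn single_term // => [|k hk]; cartan_cases.
case: ifP => [lt3|ge3]; first by rewrite single_term // => [|k hk]; cartan_cases.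
case: ifP => [/eqP n_eq|ne2].
  have -> : (n - t = 2)%N by lia.
  rewrite !big_cons big_nil addr0 n_eq.
  have -> : cartan TD n t t.+1 = -1 by cartan_cases.
  have -> : cartan TD n t n = -1 by cartan_cases.
  by rewrite !mulN1r.
have -> : (n - t = 1)%N by lia.
rewrite big_cons big_nil addr0.
have -> : cartan TD n t t.+1 = 0 by cartan_cases.
by rewrite mul0r.
Qed.

Lemma sum_cartan_low X n t g : admissible X n -> (1 <= t <= n)%N ->
  \sum_(k <- iota 1 t.-1) cartan X n t k * g k = low_sum X n t g.
Proof.
move=> HX /andP[t1 tn].
have single_term j : (1 <= j < t)%N ->
    (forall k, (1 <= k < t)%N -> k != j -> cartan X n t k * g k = 0) ->
    \sum_(k <- iota 1 t.-1) cartan X n t k * g k = cartan X n t j * g j.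
  move=> jt F0; apply: sum_seq_single; rewrite ?iota_uniq ?mem_iota //; first lia.
  by move=> k; rewrite mem_iota => kr kj; apply: F0 => //; lia.
have [t_eq1|t_gt1] := eqVneq t 1%N.
  by rewrite t_eq1 big_nil; case: X HX {single_term} => /= HX; repeat (case: ifP => ?); lia.
have t2 : (2 <= t)%N by lia.
case: X HX single_term => /= HX single_term; rewrite ?t2.
- by rewrite (single_term t.-1); [cartan_cases | lia | move=> k hk kj; cartan_cases].
- by rewrite (single_term t.-1); [cartan_cases | lia | move=> k hk kj; cartan_cases].
case: ifP => [/eqP tn'|tn'].
  by rewrite (single_term n.-2); [cartan_cases | lia | move=> k hk kj; cartan_cases].
have -> : (t < n)%N by lia.
by rewrite (single_term t.-1); [cartan_cases | lia | move=> k hk kj; cartan_cases].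
Qed.

Lemma beta_explicit X n b s t : admissible X n -> (1 <= t <= n)%N ->
  beta X n b s t = b s t + up_sum X n t (b s) + low_sum X n t (b s.+1) + b s.+1 t.
Proof. by move=> HX Ht; rewrite /beta sum_cartan_up // sum_cartan_low. Qed.

Lemma betas_explicit X n b s t : admissible X n -> (1 <= t <= n)%N ->
  betas X n b s t = b s.-1 t + up_sum X n t (b s.-1) + low_sum X n t (b s) + b s t.
Proof. by move=> HX Ht; rewrite /betas sum_cartan_up // sum_cartan_low. Qed.

(** * Linear inequalities preserved by f_j *)

Definition supported X n (b : vec) : Prop := forall s t, ~~ inI X n s t -> b s t = 0.

Definition nonneg (b : vec) : Prop := forall s t, 0 <= b s t.

(* Not a description of the image of B(oo): just inequalities stable under
   every f_j and strong enough to force beta_(len i, i) >= 0. *)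
Definition polyhedral_ineqs X n (b : vec) : Prop :=
  match X with
  | TA => forall s t, (1 <= s)%N -> (2 <= t)%N -> b s.+1 t.-1 <= b s t
  | TB => (forall s t, (1 <= s)%N -> (2 <= t <= n)%N -> b s.+1 t.-1 <= b s t) /\
          (forall s t, (1 <= t < n)%N -> (n < s + t)%N -> b s t.+1 <= b s t)
  | TD => [/\ forall s t, (1 <= s)%N -> (2 <= t)%N -> (t + 2 <= n)%N -> b s.+1 t.-1 <= b s t,
              forall s, (1 <= s)%N -> b s.+1 n.-2 <= b s n.-1 + b s n,
              forall s, (1 <= s)%N -> b s.+1 n.-1 <= b s n
            & forall s, (1 <= s)%N -> b s.+1 n <= b s n.-1] /\
          (forall s t, (1 <= t)%N -> (t + 3 <= n)%N -> (n <= s + t)%N -> b s t.+1 <= b s t) /\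
          (forall s, (2 <= s)%N -> b s n.-1 + b s n <= b s n.-2)
  end.

Definition incr_at (b : vec) (m j : nat) : vec :=
  fun s t => b s t + (if (s == m) && (t == j) then 1 else 0).

Lemma le_incr_at b m j s t : b s t <= incr_at b m j s t.
Proof. by rewrite /incr_at lerDl; case: ifP. Qed.

Lemma incr_at_le b m j x y (R R' : int) : b x y <= R -> R <= R' ->
  (x = m -> y = j -> b x y < R) -> incr_at b m j x y <= R'.
Proof.
rewrite /incr_at => le_R le_RR' hit.
by case: ifP => [/andP[/eqP Ex /eqP Ey]|_]; [have := hit Ex Ey|]; lia.
Qed.

Definition ftil_site X n (b : vec) (m j : nat) : Prop :=
  [/\ (1 <= j <= n)%N, (1 <= m <= len X n j)%N & ((2 <= m)%N -> beta X n b m.-1 j < 0)].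

(* Only an inequality
   with b_(m,j) on its small side can break, and for it beta_(m-1,j) < 0
   together with the inequalities in row m - 1 provides the missing slack. *)
Lemma polyhedral_ineqs_incr_A n b b' m j : admissible TA n -> ftil_site TA n b m j ->
  b' =2 incr_at b m j -> nonneg b -> polyhedral_ineqs TA n b -> polyhedral_ineqs TA n b'.
Proof.
case: m => [|p] HX [Hj Hm neg]; first by case/andP: Hm.
move=> b'E b_ge0 HA s t s1 t2; rewrite !b'E; apply: incr_at_le (HA s t s1 t2) (le_incr_at _ _ _ _ _) _ => -[Es] Ej.
have Et : t = j.+1 by lia.
subst s t => /=; rewrite /len /= in Hm; have := neg s1; rewrite /= beta_explicit //.
rewrite /up_sum /low_sum; case: (leqP 2 j) => [j2|j_lt2]; last first.
  by have := b_ge0 p j; repeat (case: ifP => ?); lia.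
by have := HA p j s1 j2; repeat (case: ifP => ?); lia.
Qed.

Lemma polyhedral_ineqs_incr_B n b b' m j : admissible TB n -> ftil_site TB n b m j ->
  b' =2 incr_at b m j -> nonneg b -> polyhedral_ineqs TB n b -> polyhedral_ineqs TB n b'.
Proof.
case: m => [|p] HX [Hj Hm neg]; first by case/andP: Hm.
move=> b'E b_ge0 [HB1 HB2]; split.
  move=> s t s1 t2; rewrite !b'E.
  apply: incr_at_le (HB1 s t s1 t2) (le_incr_at _ _ _ _ _) _ => -[Es] Ej.
  have Et : t = j.+1 by lia.
  subst s t => /=; have := neg s1; rewrite /= beta_explicit // /up_sum /low_sum.
  case: (leqP 2 j) => [j2|j_lt2]; last by have := b_ge0 p j; repeat (case: ifP => ?); lia.
  have j2n : (2 <= j <= n)%N by lia.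
  by have := HB1 p j s1 j2n; repeat (case: ifP => ?); lia.
move=> s t t1n st; rewrite !b'E.
apply: incr_at_le (HB2 s t t1n st) (le_incr_at _ _ _ _ _) _ => Es Ej.
subst s j; have p1' : (0 < p)%N by lia.
have := neg p1'; rewrite /= beta_explicit // /up_sum /low_sum /=.
have [tn|nt] := ltnP t.+1 n.
  have t1n' : (1 <= t.+1 < n)%N by rewrite tn.
  have st' : (n < p + t.+1)%N by lia.
  by have := HB2 p t.+1 t1n' st'; repeat (case: ifP => ?); lia.
have En : n = t.+1 by lia.
subst n; have t2 : (2 <= t.+1 <= t.+1)%N by lia.
by move: (HB1 p t.+1 p1' t2) => /=; repeat (case: ifP => ?); lia.
Qed.

Section PolyhedralIncrD.
Variables (q : nat) (b b' : vec) (p j : nat).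
Local Notation n := q.+4.
Hypotheses (site : ftil_site TD n b p.+1 j) (b'E : b' =2 incr_at b p.+1 j) (b_ge0 : nonneg b).

Lemma beta_site_lt0_D : (1 <= p)%N ->
  b p j + up_sum TD n j (b p) + low_sum TD n j (b p.+1) + b p.+1 j < 0.
Proof. by case: site => Hj _ neg p1; rewrite -beta_explicit //; apply: neg. Qed.

Lemma polyhedral_ineqs_incr_D_fork : polyhedral_ineqs TD n b -> [/\
    forall s t, (1 <= s)%N -> (2 <= t)%N -> (t + 2 <= n)%N -> b' s.+1 t.-1 <= b' s t,
    forall s, (1 <= s)%N -> b' s.+1 n.-2 <= b' s n.-1 + b' s n,
    forall s, (1 <= s)%N -> b' s.+1 n.-1 <= b' s n
  & forall s, (1 <= s)%N -> b' s.+1 n <= b' s n.-1].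
Proof.
move=> [[D1 D2 D3 D4] [D5 D6]] /=; split.
- move=> s t s1 t2 tn; rewrite !b'E.
  apply: incr_at_le (D1 s t s1 t2 tn) (le_incr_at _ _ _ _ _) _ => -[Es] Ej.
  have Et : t = j.+1 by lia.
  subst s t; have := beta_site_lt0_D s1; rewrite /up_sum /low_sum /=.
  case: (leqP 2 j) => [j2|j_lt2]; last by have := b_ge0 p j; repeat (case: ifP => ?); lia.
  have jn2 : (j + 2 <= n)%N by lia.
  by have := D1 p j s1 j2 jn2; repeat (case: ifP => ?); lia.
- move=> s s1; rewrite !b'E.
  apply: incr_at_le (D2 s s1) (lerD (le_incr_at _ _ _ _ _) (le_incr_at _ _ _ _ _)) _ => -[Es] Ej.
  subst s; have := beta_site_lt0_D s1; rewrite -Ej /up_sum /low_sum /=.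
  by move: (D1 p q.+2 s1 isT ltac:(lia)) => /=; repeat (case: ifP => ?); lia.
- move=> s s1; rewrite !b'E.
  apply: incr_at_le (D3 s s1) (le_incr_at _ _ _ _ _) _ => -[Es] Ej.
  subst s; have := beta_site_lt0_D s1; rewrite -Ej /up_sum /low_sum /=.
  by move: (D2 p s1) => /=; repeat (case: ifP => ?); lia.
move=> s s1; rewrite !b'E.
apply: incr_at_le (D4 s s1) (le_incr_at _ _ _ _ _) _ => -[Es] Ej.
subst s; have := beta_site_lt0_D s1; rewrite -Ej /up_sum /low_sum /=.
by move: (D2 p s1) => /=; repeat (case: ifP => ?); lia.
Qed.

Lemma polyhedral_ineqs_incr_D_rows : polyhedral_ineqs TD n b ->
  (forall s t, (1 <= t)%N -> (t + 3 <= n)%N -> (n <= s + t)%N -> b' s t.+1 <= b' s t) /\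
  (forall s, (2 <= s)%N -> b' s n.-1 + b' s n <= b' s n.-2).
Proof.
move=> [[D1 D2 D3 D4] [D5 D6]] /=; split.
  move=> s t t1 tn st; rewrite !b'E.
  apply: incr_at_le (D5 s t t1 tn st) (le_incr_at _ _ _ _ _) _ => Es Ej.
  subst s; have p1 : (1 <= p)%N by lia.
  have := beta_site_lt0_D p1; rewrite -Ej /up_sum /low_sum /=.
  have [tn'|tn'] := leqP (t + 4) n.
    have tn4 : (t.+1 + 3 <= n)%N by lia.
    by have := D5 p t.+1 isT tn4 ltac:(lia); repeat (case: ifP => ?); lia.
  have Et : t = q.+1 by lia.
  by subst t; move: (D6 p ltac:(lia)) => /=; repeat (case: ifP => ?); lia.
move=> s s2; move: (D6 s s2); rewrite !b'E /incr_at /=.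
case: (boolP ((s == p.+1) && (q.+3 == j))) => [/andP[/eqP Es /eqP Ej]|_].
  subst s; have := beta_site_lt0_D (s2 : 1 < p.+1)%N; rewrite -Ej /up_sum /low_sum /=.
  by move: (D4 p s2) => /=; repeat (case: ifP => ?); lia.
case: (boolP ((s == p.+1) && (q.+4 == j))) => [/andP[/eqP Es /eqP Ej]|_].
  subst s; have := beta_site_lt0_D (s2 : 1 < p.+1)%N; rewrite -Ej /up_sum /low_sum /=.
  by move: (D3 p s2) => /=; repeat (case: ifP => ?); lia.
by case: ifP; lia.
Qed.

End PolyhedralIncrD.

Lemma polyhedral_ineqs_incr_D n b b' m j : admissible TD n -> ftil_site TD n b m j ->
  b' =2 incr_at b m j -> nonneg b -> polyhedral_ineqs TD n b -> polyhedral_ineqs TD n b'.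
Proof.
case: n => [|[|[|[|q]]]] // _; case: m => [|p] site; first by case: site => _ /andP[].
move=> b'E b_ge0 ineqs.
by split; [exact: polyhedral_ineqs_incr_D_fork site b'E b_ge0 ineqs
          | exact: polyhedral_ineqs_incr_D_rows site b'E ineqs].
Qed.

Lemma Gam_recl X n j b l : (l < len X n j)%N ->
  Gam X n j b l = beta X n b l j + Gam X n j b l.+1.
Proof. by move=> lt_l; rewrite /Gam -subnSK //= big_cons. Qed.

Lemma Gam_len X n j b : Gam X n j b (len X n j) = beta X n b (len X n j) j.
Proof. by rewrite /Gam subnn big_cons big_nil addr0. Qed.

Lemma mi_site X n j b : admissible X n -> (1 <= j <= n)%N -> ftil_site X n b (mi X n j b) j.
Proof.
move=> HX Hj; have Pi0 := Pi_neq0 HX Hj.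
have [] := least_leq_mem_min (argmaxers_neq0 (Gam X n j b) Pi0); rewrite -/(mi X n j b).
set m := mi X n j b; rewrite mem_filter => /andP[/eqP Gm_max m_Pi] m_min.
have m_len : (1 <= m <= len X n j)%N by rewrite -mem_iota.
split=> // m2; have m1_Pi : m.-1 \in Pi X n j by rewrite mem_iota; lia.
have Gm1_lt : Gam X n j b m.-1 < Gam X n j b m.
  rewrite lt_neqAle Gm_max le_maxover // andbT; apply/negP => /eqP Gm1_max.
  have : m.-1 \in argmaxers (Pi X n j) (Gam X n j b) by rewrite mem_filter Gm1_max eqxx.
  by move/m_min; lia.
have m1_len : (m.-1 < len X n j)%N by lia.
by move: Gm1_lt; rewrite Gam_recl // prednK //; lia.
Qed.

Lemma ftil_incr_at X n j b : (1 <= j <= n)%N -> (1 <= mi X n j b <= len X n j)%N ->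
  ftil X n j b =2 incr_at b (mi X n j b) j.
Proof.
move=> Hj Hm s t; rewrite /ftil /vadd /vsum /incr_at /cells /= cats0 !big_map; congr (_ + _).
rewrite (@sum_iota_telescope _ (fun c => evec X n c j s t)) // /evec /inI Hj Hm /=.
by rewrite add0n andbT !andbF subr0.
Qed.

Definition Binf_inv X n (b : vec) : Prop :=
  [/\ supported X n b, nonneg b & polyhedral_ineqs X n b].

Lemma Binf_inv0 X n : Binf_inv X n vzero.
Proof. by split=> //; case: X => /=; rewrite /vzero //; repeat split; lia. Qed.

Lemma Binf_inv_ftil X n j b : admissible X n -> (1 <= j <= n)%N ->
  Binf_inv X n b -> Binf_inv X n (ftil X n j b).
Proof.
move=> HX Hj [b_supp b_ge0 ineqs]; have site := mi_site b HX Hj.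
have [_ m_len _] := site; have b'E := ftil_incr_at Hj m_len.
split.
- move=> s t st; rewrite b'E /incr_at b_supp //; case: ifP => // /andP[/eqP Es /eqP Et].
  by move: st; rewrite Es Et /inI Hj m_len.
- by move=> s t; rewrite b'E; apply: le_trans (le_incr_at _ _ _ _ _).
case: X HX site b'E ineqs {b_supp m_len} => HX site b'E ineqs.
- exact: polyhedral_ineqs_incr_A HX site b'E b_ge0 ineqs.
- exact: polyhedral_ineqs_incr_B HX site b'E b_ge0 ineqs.
- exact: polyhedral_ineqs_incr_D HX site b'E b_ge0 ineqs.
Qed.

Lemma Binf_inv_of_Binf X n b : admissible X n -> Binf X n b -> Binf_inv X n b.
Proof. by move=> HX; elim=> [|j b' Hj _]; [exact: Binf_inv0 | exact: Binf_inv_ftil]. Qed.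

(** * Nonnegativity of eps_i and eps_i^* *)

Lemma beta_len_ge0 X n i b : admissible X n -> (1 <= i <= n)%N -> Binf_inv X n b ->
  0 <= beta X n b (len X n i) i.
Proof.
move=> HX Hi [supp b_ge0 ineqs]; rewrite beta_explicit // /up_sum /low_sum.
case: X HX supp ineqs => /= HX supp ineqs.
- move: (supp (n.+1 - i)%N i.+1) (supp (n.+1 - i)%N.+1 i) (b_ge0 (n.+1 - i)%N i).
  rewrite /inI /=.
  case: (leqP 2 i) => [i2|i1]; last by repeat (case: ifP => ?); lia.
  by have := ineqs (n.+1 - i)%N i ltac:(lia) i2; repeat (case: ifP => ?); lia.
- move: (supp n.+1 i) (supp n.+1 i.-1) (b_ge0 n i); rewrite /inI /=.
  case: (ltnP i n) => [ilt|ige]; last by repeat (case: ifP => ?); lia.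
  have i1n : (1 <= i < n)%N by rewrite ilt andbT; case/andP: Hi.
  by have := ineqs.2 n i i1n ltac:(lia); repeat (case: ifP => ?); lia.
case: ineqs => _ [D5 D6]; rewrite prednK; last lia.
move: (supp n i) (supp n n.-2) (supp n i.-1) (supp n.-1 i.+1).
move: (b_ge0 n.-1 i) (b_ge0 n.-1 n.-1) (b_ge0 n.-1 n).
rewrite /inI /=; have [i3|i3] := leqP (i + 3) n.
  by have := D5 n.-1 i ltac:(lia) i3 ltac:(lia); repeat (case: ifP => ?); lia.
have [/eqP i_eq|i_ne] := boolP (i.+2 == n).
  by have := D6 n.-1 ltac:(lia); rewrite -i_eq /=; repeat (case: ifP => ?); lia.
by repeat (case: ifP => ?); lia.
Qed.

Lemma eps_ge0 X n i b : admissible X n -> (1 <= i <= n)%N -> Binf X n b -> 0 <= eps X n i b.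
Proof.
move=> HX Hi /(Binf_inv_of_Binf HX) inv.
have L_Pi : len X n i \in Pi X n i by rewrite mem_iota; case: X HX {inv} => /=; lia.
by apply: le_trans (le_maxover _ L_Pi); rewrite Gam_len beta_len_ge0.
Qed.

Lemma sum_cells (F : nat * nat -> int) mu : \sum_(c <- cells mu) F c =
  \sum_(r <- iota 0 (size mu)) \sum_(c <- iota 0 (nth 0%N mu r)) F (r.+1, c.+1).
Proof. by rewrite /cells big_flatten /= big_map; apply: eq_bigr => r _; rewrite big_map. Qed.

Lemma Tscoef_flat X n i c : ~~ isStair X n i -> Tscoef X n i c = 1.
Proof. by case: X => //= /negbTE ->. Qed.

Lemma Gams_single_row X n i b : admissible X n -> (1 <= i <= n)%N -> ~~ isStair X n i ->
  supported X n b -> Gams X n i b [:: i] = b i 1%N.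
Proof.
move=> HX Hi flat supp; rewrite /Gams sum_cells /= big_cons big_nil addr0.
rewrite (@sum_iota_telescope _ (fun x => b x (i.+1 - x)%N - b x (i - x)%N)); last first.
  move=> c /= ci; rewrite Tscoef_flat // /Tsidx (negbTE flat) mul1r subSS /=.
  rewrite betas_explicit //=; last lia.
  rewrite subnS subSn; last lia.
  move: (supp c.+1 (i - c).-1) (supp c (i - c).+1) (supp c n); rewrite /inI /up_sum /low_sum.
  by case: X HX flat {supp} => /= HX flat; repeat (case: ifP => ?); lia.
rewrite /= ?add0n subSnn subn0 subnn.
by move: (supp 0%N i.+1) (supp 0%N i) (supp i 0%N); rewrite /inI subn0; lia.
Qed.

Lemma nth_rev_iota k r : (r < k)%N -> nth 0%N (rev (iota 1 k)) r = (k - r)%N.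
Proof. by move=> lt_rk; rewrite nth_rev ?size_iota // nth_iota; lia. Qed.

Lemma Gams_B_row n b r : admissible TB n -> supported TB n b -> (r < n)%N ->
  \sum_(c <- iota 0 (n - r)) Tscoef TB n n (r.+1, c.+1) *
     betas TB n b (Tsidx TB n n (r.+1, c.+1)).1 (Tsidx TB n n (r.+1, c.+1)).2 =
  (2 * b n r.+1 - b r.+1 n) - (2 * b n r - b r n).
Proof.
move=> HX supp lt_rn; rewrite -[(n - r)%N](subnSK lt_rn) /= big_cons.
rewrite (@sum_iota_telescope _
  (fun x => 2 * (b (r + x)%N (n.+1 - x)%N - b (r + x)%N (n - x)%N))); last first.
  move=> c /andP[c1 cn]; rewrite /Tscoef /Tsidx /= eqxx /=.
  have -> : (c.+1 == 1%N) = false by lia.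
  have -> : (1 < c.+1)%N by lia.
  rewrite betas_explicit //=; last lia.
  have -> : (r + c.+1).-1 = (r + c)%N by lia.
  have -> : (n.+1 - c.+1 = n - c)%N by lia.
  have -> : (n - c.+1 = (n - c).-1)%N by lia.
  have -> : (n.+1 - c = (n - c).+1)%N by lia.
  move: (supp (r + c.+1)%N (n - c).-1); rewrite /inI /up_sum /low_sum /=.
  by repeat (case: ifP => ?); lia.
rewrite /Tscoef /Tsidx /= !eqxx /= mul1r betas_explicit //; last lia.
have -> : (r + (1 + (n - r.+1)) = n)%N by lia.
have -> : (n.+1 - (1 + (n - r.+1)) = r.+1)%N by lia.
have -> : (n - (1 + (n - r.+1)) = r)%N by lia.
rewrite addn1 !subn1 /= /up_sum /low_sum; have n2 : (2 <= n)%N := HX.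
by repeat (case: ifP => ?); lia.
Qed.

Lemma Gams_B_staircase n b : admissible TB n -> supported TB n b ->
  Gams TB n n b (rev (iota 1 n)) = b n n.
Proof.
move=> HX supp; rewrite /Gams sum_cells size_rev size_iota.
rewrite (@sum_iota_telescope _ (fun x => 2 * b n x - b x n)) => [|r /= rn].
  by move: (supp n 0%N) (supp 0%N n); rewrite /inI add0n; lia.
by rewrite nth_rev_iota // Gams_B_row.
Qed.

(* The second index of Tsidx TD n i (s, 1) on the staircase tableaux. *)
Definition fork_col (n i s : nat) : nat := if odd s == (i == n.-1) then n.-1 else n.

Lemma Gams_D_row n i b r : admissible TD n -> supported TD n b ->
  (i == n.-1) || (i == n) -> (r.+3 <= n)%N ->
  \sum_(c <- iota 0 (n.-1 - r)) Tscoef TD n i (r.+1, c.+1) *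
     betas TD n b (Tsidx TD n i (r.+1, c.+1)).1 (Tsidx TD n i (r.+1, c.+1)).2 =
  (b n.-1 r.+1 - b r.+1 (fork_col n i r.+2)) - (b n.-1 r - b r (fork_col n i r.+1)).
Proof.
move=> HX supp stair r3; have n4 : (4 <= n)%N := HX.
have -> : (n.-1 - r = (n - r.+3).+2)%N by lia.
rewrite /= !big_cons.
rewrite (@sum_iota_telescope _
  (fun x => b (r + x)%N (n - x)%N - b (r + x)%N (n - x.+1)%N)); last first.
  move=> c /andP[c2 cn]; rewrite /Tsidx /= stair.
  have -> : (c.+1 == 1%N) = false by lia.
  rewrite mul1r betas_explicit //=; last lia.
  have -> : (r + c.+1).-1 = (r + c)%N by lia.
  have -> : (n - c.+1).+1 = (n - c)%N by lia.
  have -> : (n - c.+1).-1 = (n - c.+2)%N by lia.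
  move: (supp (r + c.+1)%N (n - c.+2)%N); rewrite /inI /up_sum /low_sum /=.
  by repeat (case: ifP => ?); lia.
rewrite /Tsidx /= stair /= !mul1r !betas_explicit //=; try lia; last by case: ifP; lia.
have -> : (r + 2).-1 = r.+1 by lia.
have -> : (r + 2 = r.+2)%N by lia.
have -> : (n - 2 = n.-2)%N by lia.
have -> : n.-2.+1 = n.-1 by lia.
have -> : (n.-2.-1 = n - 3)%N by lia.
have -> : (r + (2 + (n - r.+3)) = n.-1)%N by lia.
have -> : (n - (2 + (n - r.+3)) = r.+1)%N by lia.
have -> : (n - (2 + (n - r.+3)).+1 = r)%N by lia.
rewrite /fork_col /up_sum /low_sum /=.
by case: (odd r); case: (i == n.-1) => /=; repeat (case: ifP => ?); lia.
Qed.

Lemma Gams_D_staircase n i b : admissible TD n -> supported TD n b ->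
  (i == n.-1) || (i == n) -> Gams TD n i b (rev (iota 1 n.-1)) = b n.-1 (fork_col n i n.-1).
Proof.
move=> HX supp stair; have n4 : (4 <= n)%N := HX.
rewrite /Gams sum_cells size_rev size_iota.
have -> : iota 0 n.-1 = iota 0 (n - 2) ++ iota (0 + (n - 2)) 1.
  by rewrite -iotaD; congr iota; lia.
rewrite big_cat /= big_cons big_nil addr0.
rewrite (@sum_iota_telescope _ (fun x => b n.-1 x - b x (fork_col n i x.+1))) => [|r /= rn];
  last by rewrite nth_rev_iota ?Gams_D_row //; lia.
rewrite nth_rev_iota; last lia.
have -> : (n.-1 - (n - 2) = 1)%N by lia.
rewrite /= big_cons big_nil addr0 /Tsidx /= stair /= mul1r.
rewrite betas_explicit //=; last by case: ifP; lia.
move: (supp n.-1 0%N) (supp 0%N (fork_col n i 1)); rewrite /inI /fork_col /up_sum /low_sum.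
rewrite !add0n; have -> : n.-2 = (n - 2)%N by lia.
have -> : n.-1 = (n - 2).+1 by lia.
by rewrite /=; case: (odd (n - 2)); case: (i == (n - 2).+1) => /=;
  repeat (case: ifP => ?); lia.
Qed.

Lemma epss_ge0 X n i b : admissible X n -> (1 <= i <= n)%N -> Binf X n b -> 0 <= epss X n i b.
Proof.
move=> HX Hi /(Binf_inv_of_Binf HX) [supp b_ge0 _].
have [stair|flat] := boolP (isStair X n i); last first.
  have row_in : [:: i] \in Pis X n i by rewrite /Pis (negbTE flat) map_f // mem_iota; lia.
  by apply: le_trans (le_maxover _ row_in); rewrite Gams_single_row.
have full_in : rev (iota 1 (stsize X n)) \in Pis X n i.
  rewrite /Pis stair mem_filter subseqs_self andbT -size_eq0 size_rev size_iota.
  by case: X HX stair {supp} => /=; lia.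
apply: le_trans (le_maxover _ full_in).
case: X HX stair supp {full_in} => //= HX stair supp.
  by move/eqP: stair => ->; rewrite Gams_B_staircase.
by rewrite Gams_D_staircase.
Qed.

Theorem theorem4p3 (X : ctype) (n : nat) (HX : admissible X n)
  (N : nat) (bh : hvec)
  (Hb : forall k : int, Binf X n (bh k))
  (Hsupp : forall k : int, N%:Z < `|k| -> bh k = vzero) :
  KP_wt X n N bh = comb_wt X n N bh /\
  (forall (i : nat) (k : int), (1 <= i <= n)%N ->
     [/\ KP_eps X n i k bh = comb_eps X n i k bh,
         KP_E X n i k bh = Some (comb_E X n i k bh) &
         KP_F X n i k bh = Some (comb_F X n i k bh)]).
Proof.
split=> // i k Hi; have Pi0 := Pi_neq0 HX Hi; have Pis0 := Pis_neq0 HX Hi.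
split=> //; first exact/KP_E_eq_comb_E/(epss_ge0 HX Hi).
exact/KP_F_eq_comb_F/(eps_ge0 HX Hi).
Qed.
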